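(* Let $p$ be a prime, let $f:\mathbb{F}_{p^n}\to\mathbb{F}_p$ be $s_1$-plateaued and $g:\mathbb{F}_{p^m}\to\mathbb{F}_p$ be $s_2$-plateaued. Let $M=(m_{x,y})_{x,y\in\mathbb{F}_{p^n}}$ with $m_{x,y}=\zeta_p^{f(x+y)}$ and $N=(n_{a,b})_{a,b\in\mathbb{F}_{p^m}}$ with $n_{a,b}=\zeta_p^{g(a+b)}$, and let $P=M\otimes N$ be their Kronecker product. Then $PP^*P=p^{n+m+s_1+s_2}P$, where $P^*$ is the conjugate transpose.
   Context: $\zeta_p=e^{2\pi i/p}$, $Tr_n(z)=\sum_{i=0}^{n-1}z^{p^i}$. The Walsh transform of $f:\mathbb{F}_{p^n}\to\mathbb{F}_p$ is $\widehat f(\mu)=\sum_{x}\zeta_p^{f(x)-Tr_n(\mu x)}$; $f$ is $s$-plateaued if $|\widehat f(\mu)|\in\{0,p^{(n+s)/2}\}$ for all $\mu$ (analogously for $g$ on $\mathbb{F}_{p^m}$). *)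

From mathcomp Require Import all_boot all_order all_algebra all_field.
From mathcomp Require Import mxtens.
Set Implicit Arguments. Unset Strict Implicit. Unset Printing Implicit Defensive.
Import GRing.Theory Num.Theory.
Local Open Scope ring_scope.

(* zeta_p = e^{2 pi i / p}: p.-root (-1) is the p-th root of -1 with minimal
   nonnegative argument, i.e. e^{i pi / p}; its square is e^{2 pi i / p}. *)
Definition zeta (p : nat) : algC := (p.-root (-1)) ^+ 2.

Definition trn (F : finFieldType) (p n : nat) (z : F) : F :=
  \sum_(i < n) z ^+ (p ^ i).

Arguments trn {F} p n z.

(* The element of F_p corresponding to an element of the prime subfield
   of F (the trace lands there); k is the unique k < p with k%:R = z. *)
Definition toFp (F : finFieldType) (p : nat) (z : F) : 'F_p :=
  odflt 0 [pick k : 'F_p | ((val k)%:R : F) == z].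

Arguments toFp {F} p z.

Definition walsh (F : finFieldType) (p n : nat) (f : F -> 'F_p) (mu : F) : algC :=
  \sum_(x : F) zeta p ^+ (val (f x - toFp p (trn p n (mu * x)))).

Arguments walsh {F} p n f mu.

Definition plateaued (F : finFieldType) (p n s : nat) (f : F -> 'F_p) : Prop :=
  forall mu : F, `|walsh p n f mu| = 0 \/
                 `|walsh p n f mu| = sqrtC ((p ^ (n + s))%:R).

Arguments plateaued {F} p n s f.

Definition fmatrix (F : finFieldType) (p : nat) (f : F -> 'F_p) :
  'M[algC]_(#|F|) :=
  \matrix_(i, j) zeta p ^+ (val (f (enum_val i + enum_val j))).

Arguments fmatrix {F} p f.

Definition ctrans (m n : nat) (A : 'M[algC]_(m, n)) : 'M[algC]_(n, m) :=
  map_mx (@Num.conj _) A^T.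

From mathcomp Require Import all_boot all_order all_algebra all_field.
From mathcomp Require Import mxtens ring.
Import GRing.Theory Num.Theory.
Local Open Scope ring_scope.
Set Implicit Arguments. Unset Strict Implicit. Unset Printing Implicit Defensive.

(* Let chi x = zeta_p ^ Tr(x) be the canonical additive character of F and
   V = (chi (x y))_(x, y).  Fourier inversion of the Walsh transform reads
   V D V = |F| M with D = diag (hat f mu), and orthogonality of characters
   gives V V^* = V^* V = |F| I.  Hence M M^* M = |F|^-1 V (D D^* D) V, and
   f being s-plateaued says exactly that D D^* D = p^(n+s) D.  Kronecker
   products multiply the two constants. *)

Section PrimeFieldCharacter.
Variables (p : nat) (p_pr : prime p).

Lemma val_Fp_lt (a : 'F_p) : (val a < p)%N.
Proof. by have := ltn_ord a; rewrite [X in (_ < X)%N -> _]Fp_cast. Qed.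

Lemma val_FpD (a b : 'F_p) : val (a + b) = ((val a + val b) %% p)%N.
Proof. by rewrite -val_Fp_nat // natrD !natr_Zp. Qed.

Lemma zeta_prim_root : p.-primitive_root (zeta p).
Proof.
have p_gt1 := prime_gt1 p_pr.
have zeta_p : zeta p ^+ p = 1.
  by rewrite /zeta -exprM mulnC exprM rootCK ?prime_gt0 // sqrrN expr1n.
have zeta_neq1 : zeta p != 1.
  rewrite /zeta sqrf_eq1; apply/norP; split; apply/eqP => root_pm1.
    have := rootCK (ltnW p_gt1) (-1 : algC); rewrite root_pm1 expr1n => /eqP.
    by rewrite -subr_eq0 opprK -(natrD _ 1 1) pnatr_eq0.
  by have := rootC_lt0 (-1 : algC) p_gt1; rewrite root_pm1 ltrN10.
have [k k_prim k_dvd_p] := prim_order_exists (prime_gt0 p_pr) zeta_p.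
case/primeP: p_pr => _ /(_ k k_dvd_p) /pred2P [k1 | kp]; last by subst k.
by move: zeta_neq1; rewrite -[zeta p]expr1 -k1 prim_expr_order ?eqxx.
Qed.

Definition ep (a : 'F_p) : algC := zeta p ^+ val a.

Lemma ep0 : ep 0 = 1.
Proof. exact: expr0. Qed.

Lemma epD a b : ep (a + b) = ep a * ep b.
Proof. by rewrite /ep val_FpD (prim_expr_mod zeta_prim_root) exprD. Qed.

Lemma ep_eq1 a : (ep a == 1) = (a == 0).
Proof. by rewrite /ep -(prim_order_dvd zeta_prim_root) /dvdn modn_small ?val_Fp_lt. Qed.

Lemma normr_ep a : `|ep a| = 1.
Proof. by rewrite /ep /zeta !normrX norm_rootC normrN1 rootC1 ?prime_gt0 // !expr1n. Qed.

Lemma conj_ep a : (ep a)^* = ep (- a).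
Proof.
have ep_neq0 : ep a != 0 by rewrite -normr_eq0 normr_ep oner_neq0.
by apply: (mulIf ep_neq0); rewrite -normCKC normr_ep expr1n -epD addNr ep0.
Qed.
End PrimeFieldCharacter.

Section PrimeSubring.
Variables (R : idomainType) (p : nat).
Hypothesis chR : p \in [pchar R].
Let p_pr : prime p := pcharf_prime chR.

Lemma natr_Fp_inj : injective (fun k : 'F_p => (val k)%:R : R).
Proof.
suff le_inj (a b : 'F_p) : (val a <= val b)%N -> ((val a)%:R : R) = (val b)%:R -> a = b.
  move=> a b /= eq_ab; case: (leqP a b) => [le_ab | /ltnW le_ba]; first exact: le_inj.
  exact/esym/le_inj/esym.
move=> le_ab eq_ab; apply: val_inj; apply/eqP.
rewrite -(modn_small (val_Fp_lt p_pr a)) -(modn_small (val_Fp_lt p_pr b)) eq_sym.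
by rewrite eqn_mod_dvd // (dvdn_pcharf chR) natrB // eq_ab subrr.
Qed.

Lemma natr_FpD (a b : 'F_p) : ((val (a + b))%:R : R) = (val a)%:R + (val b)%:R.
Proof. by rewrite val_FpD // (GRing.natr_mod_pchar chR) natrD. Qed.

Lemma frobenius_fixed_natr (u : R) : u ^+ p = u -> exists k : 'F_p, u = (val k)%:R.
Proof.
move=> u_fixed.
(* Otherwise u and the p distinct k%:R would be p + 1 roots of 'X^p - 'X. *)
have [/existsP [k /eqP ->] | not_natr] := boolP [exists k : 'F_p, u == (val k)%:R].
  by exists k.
have fixed_root x : x ^+ p = x -> root ('X^p - 'X) x.
  by move=> x_fixed; rewrite rootE hornerD hornerN hornerXn hornerX x_fixed subrr.
have size_q : size ('X^p - 'X : {poly R}) = p.+1.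
  by rewrite size_polyDl size_polyXn // size_polyN size_polyX ltnS prime_gt1.
suff : 'X^p - 'X = 0 :> {poly R} by move=> q0; move: size_q; rewrite q0 size_poly0.
apply: (@roots_geq_poly_eq0 _ _ (u :: [seq (val k)%:R | k <- enum 'F_p])).
- rewrite /= fixed_root //; apply/allP => _ /mapP [k _ ->]; apply: fixed_root.
  by rewrite -(pFrobenius_autE chR) pFrobenius_aut_nat.
- rewrite /= map_inj_uniq ?enum_uniq ?andbT; last exact: natr_Fp_inj.
  by apply/mapP => -[k _ u_k]; move/existsP: not_natr; apply; exists k; apply/eqP.
- by rewrite size_q /= size_map -cardE card_Fp.
Qed.
End PrimeSubring.

Lemma toFp_natr (F : finFieldType) (p : nat) (k : 'F_p) :
  p \in [pchar F] -> toFp p ((val k)%:R : F) = k.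
Proof.
move=> chF; rewrite /toFp; case: pickP => [k' /eqP /(natr_Fp_inj chF) // | /(_ k)].
by rewrite eqxx.
Qed.

Section Trace.
Variables (F : finFieldType) (p n : nat).
Hypotheses (p_pr : prime p) (cardF : #|F| = (p ^ n)%N).
Let chF : p \in [pchar F] := card_finPcharP cardF p_pr.

Let n_gt0 : (0 < n)%N.
Proof. by case: n cardF => // /eqP; rewrite expn0 eqn_leq leqNgt finNzRing_gt1. Qed.

Lemma trnD (x y : F) : trn p n (x + y) = trn p n x + trn p n y.
Proof.
rewrite /trn -big_split; apply: eq_bigr => i _; apply: exprDn_pchar.
by rewrite (eq_pnat _ (pcharf_eq chF)) pnatX pnat_id.
Qed.

Lemma trn_frobenius (x : F) : trn p n x ^+ p = trn p n x.
Proof.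
rewrite -(pFrobenius_autE chF) rmorph_sum /=.
under eq_bigr do rewrite pFrobenius_autE -exprM -expnSr.
case: n n_gt0 cardF => // k _ cardF'.
by rewrite big_ord_recr /trn big_ord_recl /= -cardF' expf_card addrC.
Qed.

Lemma trn_neq0 : exists x : F, trn p n x != 0.
Proof.
have [trn0 | /forallPn [x trn_x]] := boolP [forall x : F, trn p n x == 0]; last first.
  by exists x.
pose q : {poly F} := \sum_(i < n) 'X^(p ^ i).
have q1 : q`_1 = 1.
  rewrite coef_sum; case: n n_gt0 => // k _.
  rewrite big_ord_recl /= coefXn eqxx big1 ?addr0 // => i _.
  by rewrite coefXn ltn_eqF // -{1}(expn0 p) ltn_exp2l ?prime_gt1.
suff q0 : q = 0 by move: q1; rewrite q0 coef0 => /eqP; rewrite eq_sym oner_eq0.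
apply: (@roots_geq_poly_eq0 _ _ (enum F)); last 1 first.
- rewrite -cardE cardF; apply: (leq_trans (size_sum _ _ _)).
  apply/bigmax_leqP => i _; rewrite size_polyXn ltn_exp2l ?prime_gt1 //.
- apply/allP => x _; rewrite rootE horner_sum.
  under eq_bigr do rewrite hornerXn.
  exact: (forallP trn0 x).
- exact: enum_uniq.
Qed.

Definition trFp (x : F) : 'F_p := toFp p (trn p n x).

Lemma trFpE x : ((val (trFp x))%:R : F) = trn p n x.
Proof.
rewrite /trFp; have [k ->] := frobenius_fixed_natr chF (trn_frobenius x).
by rewrite toFp_natr.
Qed.

Lemma trFpD x y : trFp (x + y) = trFp x + trFp y.
Proof. by apply: (natr_Fp_inj chF); rewrite /= natr_FpD // !trFpE trnD. Qed.

Lemma trFp0 : trFp 0 = 0.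
Proof. by apply: (addrI (trFp 0)); rewrite -trFpD !addr0. Qed.

Lemma trFpN x : trFp (- x) = - trFp x.
Proof. by apply: (addrI (trFp x)); rewrite -trFpD !subrr trFp0. Qed.

Lemma trFp_neq0 : exists x, trFp x != 0.
Proof.
have [x trn_x] := trn_neq0; exists x.
by apply: contraNneq trn_x => trFp_x; rewrite -trFpE trFp_x.
Qed.

Definition trchar (x : F) : algC := ep (trFp x).

Lemma trcharD x y : trchar (x + y) = trchar x * trchar y.
Proof. by rewrite /trchar trFpD epD. Qed.

Lemma conj_trchar x : (trchar x)^* = trchar (- x).
Proof. by rewrite /trchar conj_ep // trFpN. Qed.

Lemma sum_trchar_mul a :
  \sum_(x : F) trchar (a * x) = if a == 0 then #|F|%:R else 0.
Proof.
have [-> | a_neq0] := eqVneq a 0.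
  by under eq_bigr do rewrite mul0r /trchar trFp0 ep0; rewrite sumr_const.
have [x0 trFp_x0] := trFp_neq0.
set S := \sum_x _.
have S_invariant : S = S * trchar x0.
  rewrite {1}/S (reindex_inj (addIr (x0 / a))) mulr_suml; apply: eq_bigr => x _.
  by rewrite mulrDr mulrCA divff // mulr1 trcharD.
apply/eqP; move/eqP: S_invariant.
rewrite -subr_eq0 -{1}(mulr1 S) -mulrBr mulf_eq0 subr_eq0 [1 == _]eq_sym.
by rewrite /trchar ep_eq1 // (negbTE trFp_x0) orbF.
Qed.
End Trace.

Section WalshInversion.
Variables (F : finFieldType) (p n : nat) (f : F -> 'F_p).
Hypotheses (p_pr : prime p) (cardF : #|F| = (p ^ n)%N).

Lemma walshE mu : walsh p n f mu = \sum_x ep (f x) * (trchar p n (mu * x))^*.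
Proof.
apply: eq_bigr => x _; rewrite -[LHS]/(ep (f x - trFp p n (mu * x))).
by rewrite epD // /trchar conj_ep.
Qed.

Lemma walsh_inversion z :
  \sum_mu walsh p n f mu * trchar p n (mu * z) = #|F|%:R * ep (f z).
Proof.
have inner_sum x : \sum_mu ep (f x) * (trchar p n (mu * x))^* * trchar p n (mu * z)
               = ep (f x) * (if z - x == 0 then #|F|%:R else 0).
  rewrite -(sum_trchar_mul p_pr cardF) mulr_sumr; apply: eq_bigr => mu _.
  rewrite -mulrA conj_trchar // -trcharD //; congr (_ * trchar _ _ _).
  by rewrite mulrBl addrC (mulrC z) (mulrC x).
under eq_bigr do rewrite walshE mulr_suml.
rewrite exchange_big /=; under eq_bigr do rewrite inner_sum.
rewrite (bigD1 z) //= subrr eqxx big1 ?addr0 => [|x /negbTE]; first by rewrite mulrC.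
by rewrite subr_eq0 eq_sym => ->; rewrite mulr0.
Qed.
End WalshInversion.

Lemma ctransM m n k (A : 'M[algC]_(m, n)) (B : 'M[algC]_(n, k)) :
  ctrans (A *m B) = ctrans B *m ctrans A.
Proof. by rewrite /ctrans trmx_mul map_mxM. Qed.

Lemma ctransZ m n a (A : 'M[algC]_(m, n)) : ctrans (a *: A) = a^* *: ctrans A.
Proof. by rewrite /ctrans linearZ map_mxZ. Qed.

Lemma ctrans_diag_mx k (d : 'rV[algC]_k) :
  ctrans (diag_mx d) = diag_mx (map_mx Num.conj d).
Proof. by rewrite /ctrans tr_diag_mx map_diag_mx. Qed.

Lemma ctrans_tens m1 n1 m2 n2 (A : 'M[algC]_(m1, n1)) (B : 'M[algC]_(m2, n2)) :
  ctrans (A *t B) = ctrans A *t ctrans B.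
Proof. by rewrite /ctrans trmx_tens map_mxT. Qed.

Lemma tensmxZ m1 n1 m2 n2 (a b : algC) (A : 'M[algC]_(m1, n1)) (B : 'M[algC]_(m2, n2)) :
  (a *: A) *t (b *: B) = (a * b) *: (A *t B).
Proof. by apply/matrixP => i j; rewrite !mxE mulrACA. Qed.

Lemma diag_mx_cube k (d : 'rV[algC]_k) (r : algC) :
    (forall j, `|d 0 j| = 0 \/ `|d 0 j| = sqrtC r) ->
  diag_mx d *m ctrans (diag_mx d) *m diag_mx d = r *: diag_mx d.
Proof.
move=> d_plateau; rewrite ctrans_diag_mx !mulmx_diag.
apply/matrixP => i j; rewrite !mxE -normCK mulrnAr; congr (_ *+ _).
by case: (d_plateau i) => [/normr0_eq0 -> | ->]; rewrite ?mulr0 ?sqrtCK.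
Qed.

Lemma ctrans_sandwich_cube k (V D : 'M[algC]_k) (c : nat) (r : algC) :
    (0 < c)%N -> V *m ctrans V = c%:R%:M -> D *m ctrans D *m D = r *: D ->
  let A := c%:R^-1 *: (V *m D *m V) in A *m ctrans A *m A = r *: A.
Proof.
move=> c_gt0 VV' DD'D A.
have c_neq0 : (c%:R : algC) != 0 by rewrite pnatr_eq0 -lt0n.
have V'V : ctrans V *m V = c%:R%:M.
  have : ctrans V *m (c%:R^-1 *: V) = 1%:M.
    by apply: mulmx1C; rewrite -scalemxAl VV' scale_scalar_mx mulVf.
  by rewrite -scalemxAr => /(congr1 ( *:%R c%:R)); rewrite scalerA mulfV // scale1r scalemx1.
rewrite /A ctransZ !ctransM fmorphV rmorph_nat -!scalemxAl -!scalemxAr !scalerA !mulmxA.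
rewrite -[V *m D *m V *m _](mulmxA (V *m D)) VV' mul_mx_scalar -!scalemxAl.
rewrite -[_ *m ctrans V *m V]mulmxA V'V mul_mx_scalar -!scalemxAl.
rewrite -(mulmxA V D (ctrans D)) -(mulmxA V (D *m ctrans D) D) DD'D.
rewrite -scalemxAr -scalemxAl !scalerA; congr (_ *: _); by field.
Qed.

Lemma sum_enum_val (T : finType) (G : T -> algC) :
  \sum_(i < #|T|) G (enum_val i) = \sum_x G x.
Proof. by rewrite -(big_enum_val G). Qed.

Section FourierMatrix.
Variables (F : finFieldType) (p n : nat) (f : F -> 'F_p).
Hypotheses (p_pr : prime p) (cardF : #|F| = (p ^ n)%N).

Definition trchar_mx : 'M[algC]_#|F| :=
  \matrix_(i, j) trchar p n (enum_val i * enum_val j).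

Definition walsh_mx : 'M[algC]_#|F| := diag_mx (\row_j walsh p n f (enum_val j)).

Lemma trchar_mx_unitary : trchar_mx *m ctrans trchar_mx = #|F|%:R%:M.
Proof.
apply/matrixP => i j; rewrite !mxE.
transitivity (\sum_mu trchar p n ((enum_val i - enum_val j) * mu)).
  rewrite -sum_enum_val; apply: eq_bigr => k _.
  by rewrite !mxE conj_trchar // -trcharD // mulrBl.
by rewrite sum_trchar_mul // subr_eq0 (inj_eq enum_val_inj); case: (i == j).
Qed.

Lemma fmatrix_fourier :
  fmatrix p f = #|F|%:R^-1 *: (trchar_mx *m walsh_mx *m trchar_mx).
Proof.
have c_neq0 : (#|F|%:R : algC) != 0 by rewrite pnatr_eq0 -lt0n; apply/card_gt0P; exists 0.
apply: (scalerI c_neq0); rewrite scalerA mulfV // scale1r.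
apply/matrixP => i j; rewrite mul_mx_diag !mxE.
transitivity (\sum_mu walsh p n f mu * trchar p n (mu * (enum_val i + enum_val j))).
  by rewrite walsh_inversion.
rewrite -sum_enum_val; apply: eq_bigr => k _.
by rewrite !mxE mulrDr trcharD // [enum_val i * _]mulrC mulrCA mulrA.
Qed.

Lemma fmatrix_cube s : plateaued p n s f ->
  fmatrix p f *m ctrans (fmatrix p f) *m fmatrix p f = (p ^ (n + s))%:R *: fmatrix p f.
Proof.
move=> f_plateaued; rewrite fmatrix_fourier; apply: ctrans_sandwich_cube.
- by rewrite cardF expn_gt0 prime_gt0.
- exact: trchar_mx_unitary.
- by apply: diag_mx_cube => j; rewrite mxE; apply: f_plateaued.
Qed.
End FourierMatrix.

Theorem mainTheorem8 (p n m s1 s2 : nat) (F G : finFieldType)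
  (f : F -> 'F_p) (g : G -> 'F_p) :
  prime p -> #|F| = (p ^ n)%N -> #|G| = (p ^ m)%N ->
  plateaued p n s1 f -> plateaued p m s2 g ->
  let P := fmatrix p f *t fmatrix p g in
  P *m ctrans P *m P = ((p ^ (n + m + s1 + s2))%N)%:R *: P.
Proof.
move=> p_pr cardF cardG f_plateaued g_plateaued P.
rewrite /P ctrans_tens !tensmx_mul (fmatrix_cube p_pr cardF f_plateaued).
rewrite (fmatrix_cube p_pr cardG g_plateaued) tensmxZ -natrM -expnD.
by rewrite addnACA addnA.
Qed.
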